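(* Let $W\in\mathbb{D}_n$ satisfy the Ground Assumption, and let $\sigma\subset\mathcal{E}$, $\tau\subset\mathcal{I}$. If $\sigma\sqcup\tau\in FP(W)$, then $\sigma\sqcup\tau'\in FP(W)$ for every $\tau'$ with $\tau\subset\tau'\subset\mathcal{I}$.
   Context: Threshold-linear network: $\dot x_i=-x_i+[\sum_j W_{ij}x_j+b_i]_+$ with $[y]_+=\max(0,y)$; a fixed point is $x^*$ with $x^*=[Wx^*+b]_+$. A Dale matrix $W\in\mathbb{D}_n$ is an $n\times n$ real matrix with a partition $[n]=\mathcal{E}\sqcup\mathcal{I}$ such that $W_{ii}=0$, $W_{ji}\ge0$ for all $j$ if $i\in\mathcal{E}$, $W_{ji}\le0$ for all $j$ if $i\in\mathcal{I}$. Ground Assumption: $(I-W)_\sigma$ nonsingular for every nonempty $\sigma\subset[n]$. $FP(W,b)$ is the set of supports $\{i\in[n]:x^*_i>0\}$ of all fixed points $x^*$ of the network $(W,b)$, and $FP(W)=\bigcup_{b\in\mathbb{R}^n_{\ge0}}FP(W,b)$. *)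

From HB Require Import structures.
From mathcomp Require Import all_boot all_order all_algebra.
From mathcomp Require Import reals.
Set Implicit Arguments. Unset Strict Implicit. Unset Printing Implicit Defensive.
Import Order.TTheory GRing.Theory Num.Theory.
Local Open Scope ring_scope.

Section TLN.
Variables (R : realType) (n : nat).

Definition relu (y : R) : R := Num.max 0 y.

Definition is_fixed_point (W : 'M[R]_n) (b x : 'I_n -> R) : Prop :=
  forall i : 'I_n, x i = relu (\sum_(j < n) W i j * x j + b i).

Definition supp (x : 'I_n -> R) : {set 'I_n} := [set i | 0 < x i].

Definition FPb (W : 'M[R]_n) (b : 'I_n -> R) (s : {set 'I_n}) : Prop :=
  exists x : 'I_n -> R, is_fixed_point W b x /\ supp x = s.

Definition FP (W : 'M[R]_n) (s : {set 'I_n}) : Prop :=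
  exists b : 'I_n -> R, (forall i, 0 <= b i) /\ FPb W b s.

(* W is a Dale matrix w.r.t. the partition [n] = E ⊔ (~: E) (I = ~: E) *)
Definition Dale (W : 'M[R]_n) (E : {set 'I_n}) : Prop :=
  forall i : 'I_n, W i i = 0 /\
    forall j : 'I_n, (i \in E -> 0 <= W j i) /\ (i \notin E -> W j i <= 0).

Definition principal (M : 'M[R]_n) (s : {set 'I_n}) : 'M[R]_#|s| :=
  \matrix_(i < #|s|, j < #|s|) M (enum_val i) (enum_val j).

Definition ground_assumption (W : 'M[R]_n) : Prop :=
  forall s : {set 'I_n}, s != set0 -> \det (principal (1%:M - W) s) != 0.

End TLN.

From HB Require Import structures.
From mathcomp Require Import all_boot all_order all_algebra.
From mathcomp Require Import reals.
Import Order.TTheory GRing.Theory Num.Theory.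
Local Open Scope ring_scope.

(* A vector x >= 0 with W x <= x is a fixed point for the nonnegative input
   b = x - W x, so its support lies in FP(W).  A fixed point of (W, b) with
   b >= 0 has this property, and adding 1 to every neuron of tau' keeps it:
   x only grows, while W x can only decrease because the columns of W at
   inhibitory neurons are nonpositive.  The new support is sigma :|: tau :|: tau' = sigma :|: tau'. *)

Section FixedPointSupports.
Variables (R : realType) (n : nat) (W : 'M[R]_n).

Lemma fixed_point_ge0 (b x : 'I_n -> R) i :
  is_fixed_point W b x -> 0 <= x i.
Proof. by move=> fpx; rewrite fpx /relu le_max lexx. Qed.

Lemma fixed_point_mulv_le (b x : 'I_n -> R) i :
  (forall j, 0 <= b j) -> is_fixed_point W b x ->
  \sum_(j < n) W i j * x j <= x i.
Proof.
move=> b_ge0 fpx; rewrite [x i]fpx /relu le_max; apply/orP; right.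
by rewrite lerDl.
Qed.

Lemma FP_supp (x : 'I_n -> R) :
  (forall i, 0 <= x i) -> (forall i, \sum_(j < n) W i j * x j <= x i) ->
  FP W (supp x).
Proof.
move=> x_ge0 Wx_le; exists (fun i => x i - \sum_(j < n) W i j * x j).
split=> [i|]; first by rewrite subr_ge0.
by exists x; split=> // i; rewrite addrC subrK /relu max_r.
Qed.

Lemma Dale_mulv_inhib_le0 (E : {set 'I_n}) (y : 'I_n -> R) i :
  Dale W E -> (forall j, 0 <= y j) -> (forall j, j \in E -> y j = 0) ->
  \sum_(j < n) W i j * y j <= 0.
Proof.
move=> dale y_ge0 y_inhib; apply: sumr_le0 => j _.
have [jE|jI] := boolP (j \in E); first by rewrite y_inhib // mulr0.
have [_ /(_ i) [_ /(_ jI) Wij_le0]] := dale j.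
by rewrite mulr_le0_ge0.
Qed.

End FixedPointSupports.

Lemma supp_add_indicator (R : realType) (n : nat) (x : 'I_n -> R)
    (A : {set 'I_n}) :
  (forall i, 0 <= x i) -> supp (fun i => x i + (i \in A)%:R) = supp x :|: A.
Proof.
move=> x_ge0; apply/setP => i; rewrite !inE.
have [iA|] := boolP (i \in A); last by rewrite addr0 orbF.
by rewrite orbT ltr_wpDl.
Qed.

Theorem mainTheorem12 (R : realType) (n : nat) (W : 'M[R]_n) (E : {set 'I_n})
  (sigma tau : {set 'I_n}) :
  Dale W E -> ground_assumption W ->
  sigma \subset E -> tau \subset ~: E ->
  FP W (sigma :|: tau) ->
  forall tau' : {set 'I_n}, tau \subset tau' -> tau' \subset ~: E ->
  FP W (sigma :|: tau').
Proof.
move=> dale _ _ _ [b [b_ge0 [x [fpx supp_x]]]] tau' tau_tau' tau'_inhib.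
have x_ge0 i : 0 <= x i by exact: fixed_point_ge0 fpx.
pose y i : R := (i \in tau')%:R.
have y_ge0 j : 0 <= y j by rewrite ler0n.
have y_inhib j : j \in E -> y j = 0.
  move=> jE; rewrite /y; case: (boolP (j \in tau')) => // /(subsetP tau'_inhib).
  by rewrite inE jE.
have -> : sigma :|: tau' = supp (fun i => x i + y i).
  by rewrite supp_add_indicator // supp_x -setUA (setUidPr tau_tau').
apply: FP_supp => [i|i]; first by rewrite addr_ge0.
under eq_bigr do rewrite mulrDr.
rewrite big_split /= lerD //; first exact: fixed_point_mulv_le fpx.
by apply: le_trans (y_ge0 i); exact: Dale_mulv_inhib_le0 dale y_ge0 y_inhib.
Qed.
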